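(* The sets $H_\pm$ intersect $\partial(T^*E_{2\delta_0}\times\mathbb{R})\subset J^1(S)$ transversely. Moreover, $H_\pm(2\delta_0)$ is invariant under the Reeb flow of $dz-p\,dq$, and its projection $\overline H_\pm(2\delta_0)\subset T^*E_{2\delta_0}$ is a smooth $J_0$-complex subvariety.
   Context: $\alpha_0=dx_3-x_2\,dx_1+x_1\,dx_2$ on $\mathbb{R}^3$. Fix $\delta_0>0$ and let $S\subset\mathbb{R}^3$ be the smooth boundary of a compact convex set containing the origin in its interior, symmetric under reflection in the $y_1y_2$-plane and rotations about the $y_3$-axis, such that $S\cap\{y_1^2+y_2^2\le 9\delta_0^2\}=\{(y_1,y_2,\pm1): y_1^2+y_2^2\le 9\delta_0^2\}$; $\nu$ is the outward unit normal. For $0<k<3$ put $E_{k\delta_0}=\{(y_1,y_2,\pm1): y_1^2+y_2^2\le k^2\delta_0^2\}\subset S$. $S^*\mathbb{R}^3=\mathbb{R}^3\times S$ (contact form $y\cdot dx$) is identified with $J^1(S)=T^*S\times\mathbb{R}$ (contact form $dz-p\,dq$, $p\in T_qS$) via $(x,y)\mapsto(y,x-(x\cdot\nu(y))\nu(y),x\cdot y)$. $H_\pm=\{(x,y)\in S^*\mathbb{R}^3: y=t(-x_2,x_1,1),\ \pm t>0\}$, viewed in $J^1(S)$; $H_\pm(k\delta_0)=H_\pm\cap(T^*E_{k\delta_0}\times\mathbb{R})$; bars denote images under the projection $J^1(S)\to T^*S$. $J_0$ is the standard integrable complex structure on $T^*E_{3\delta_0}$ via the identification $((u_1,u_2,\pm1),(v_1,v_2,0))\mapsto(u_1+iv_1,u_2+iv_2)\in\mathbb{C}^2$.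 *)

From mathcomp Require Import all_boot all_algebra.
From mathcomp Require Import all_classical all_reals all_analysis.
Import GRing.Theory Num.Theory numFieldNormedType.Exports.
Local Open Scope ring_scope.
Local Open Scope classical_set_scope.

Set Implicit Arguments.
Unset Strict Implicit.
Unset Printing Implicit Defensive.

Section Defs.
Variable R : realType.

Definition vec3 (a b c : R) : 'rV[R]_3 := \row_(i < 3) nth 0 [:: a; b; c] i.
(* the i-th coordinate (i = 0,1,2 stands for y_1, y_2, y_3 of the paper) *)
Definition cx (y : 'rV[R]_3) (i : nat) : R := y ord0 (inord i).
Definition dot3 (x y : 'rV[R]_3) : R := \sum_(i < 3) x ord0 i * y ord0 i.

Definition is_convex (K : set 'rV[R]_3) :=
  forall a b, K a -> K b -> forall t : R, 0 <= t <= 1 -> K ((1 - t) *: a + t *: b).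

(* topological boundary of a closed set *)
Definition bdry (K : set 'rV[R]_3) : set 'rV[R]_3 := K `\` interior K.

(* iterated directional derivatives; C^infinity = Frechet differentiable
   to all orders *)
Fixpoint iterD (vs : seq 'rV[R]_3) (f : 'rV[R]_3 -> R) : 'rV[R]_3 -> R :=
  match vs with
  | [::] => f
  | v :: vs' => fun x => 'D_v (iterD vs' f) x
  end.
Definition smooth3 (f : 'rV[R]_3 -> R) :=
  forall (vs : seq 'rV[R]_3) (x : 'rV[R]_3), differentiable (iterD vs f) x.

Definition grad (f : 'rV[R]_3 -> R) (y : 'rV[R]_3) : 'rV[R]_3 :=
  \row_(i < 3) 'D_(delta_mx ord0 i) f y.

(* outward unit normal of S = {rho = 0} = bdry {rho <= 0} *)
Definition nu_of (rho : 'rV[R]_3 -> R) (y : 'rV[R]_3) : 'rV[R]_3 :=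
  (Num.sqrt (dot3 (grad rho y) (grad rho y)))^-1 *: grad rho y.

Definition reflect12 (y : 'rV[R]_3) := vec3 (cx y 0) (cx y 1) (- cx y 2).
Definition rot3 (th : R) (y : 'rV[R]_3) :=
  vec3 (cos th * cx y 0 - sin th * cx y 1) (sin th * cx y 0 + cos th * cx y 1)
       (cx y 2).

Definition Edisk (k d0 : R) : set 'rV[R]_3 :=
  [set y | (cx y 2 = 1 \/ cx y 2 = -1) /\
           cx y 0 ^+ 2 + cx y 1 ^+ 2 <= k ^+ 2 * d0 ^+ 2].

(** * J^1(S) = T^*S x R, realised as {(q,p,z) | q in S, p in T_qS} in R^3 x R^3 x R *)
Definition Jt := ('rV[R]_3 * 'rV[R]_3 * R)%type.
Definition jq (m : Jt) : 'rV[R]_3 := m.1.1.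
Definition jp (m : Jt) : 'rV[R]_3 := m.1.2.
Definition jz (m : Jt) : R := m.2.

Definition J1 (rho : 'rV[R]_3 -> R) (S : set 'rV[R]_3) : set Jt :=
  [set m | S (jq m) /\ dot3 (jp m) (nu_of rho (jq m)) = 0].

(* the identification S^*R^3 = R^3 x S  -> J^1(S) *)
Definition jet_map (rho : 'rV[R]_3 -> R) (x y : 'rV[R]_3) : Jt :=
  (y, x - dot3 x (nu_of rho y) *: nu_of rho y, dot3 x y).

(* H_+ for sgn = 1, H_- for sgn = -1 *)
Definition Hset (rho : 'rV[R]_3 -> R) (S : set 'rV[R]_3) (sgn : R) : set Jt :=
  [set m | exists (x y : 'rV[R]_3) (t : R),
     S y /\ 0 < sgn * t /\ y = t *: vec3 (- cx x 1) (cx x 0) 1 /\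
     m = jet_map rho x y].

Definition TEx (rho : 'rV[R]_3 -> R) (S : set 'rV[R]_3) (k d0 : R) : set Jt :=
  [set m | J1 rho S m /\ Edisk k d0 (jq m)].

Definition Hk rho S sgn k d0 : set Jt := Hset rho S sgn `&` TEx rho S k d0.

Definition rel_boundary (X A : set Jt) : set Jt :=
  [set m | X m /\ forall U : set Jt, nbhs m U ->
     (exists a, A a /\ U a) /\ (exists b, X b /\ ~ A b /\ U b)].

Definition tangent_cone (A : set Jt) (m : Jt) : set Jt :=
  [set w | exists (g : R -> Jt) (e : R), 0 < e /\ g 0 = m /\
     (forall t, `|t| < e -> A (g t)) /\ derivable g 0 1 /\ 'D_1 g 0 = w].

Definition transverse (X A B : set Jt) :=
  forall m, A m -> B m -> forall w, tangent_cone X m w ->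
    exists a b, tangent_cone A m a /\ tangent_cone B m b /\ w = a + b.

(* contact form dz - p dq and its differential -dp /\ dq *)
Definition alpha (m w : Jt) : R := jz w - dot3 (jp m) (jq w).
Definition dalpha (v w : Jt) : R := dot3 (jp w) (jq v) - dot3 (jp v) (jq w).

Definition reeb_field (X : set Jt) (Rf : Jt -> Jt) :=
  forall m, X m -> tangent_cone X m (Rf m) /\ alpha m (Rf m) = 1 /\
    forall w, tangent_cone X m w -> dalpha (Rf m) w = 0.

Definition reeb_invariant (X A : set Jt) :=
  forall Rf, reeb_field X Rf ->
  forall (g : R -> Jt) (T : R), 0 < T ->
    (forall t, `|t| < T -> X (g t) /\ derivable g t 1 /\ 'D_1 g t = Rf (g t)) ->
    A (g 0) -> forall t, `|t| < T -> A (g t).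

Definition TS := ('rV[R]_3 * 'rV[R]_3)%type.
Definition proj_set (A : set Jt) : set TS := [set qp | exists m, A m /\ qp = (jq m, jp m)].

(* C^n as (real parts, imaginary parts) *)
Definition Cn (n : nat) := ('rV[R]_n * 'rV[R]_n)%type.
Definition Jc (n : nat) (c : Cn n) : Cn n := (- c.2, c.1).  (* mult. by i *)

(* the chart ((u1,u2,s),(v1,v2,0)) |-> (u1 + i v1, u2 + i v2) *)
Definition chart (qp : TS) : Cn 2 :=
  (\row_(j < 2) qp.1 ord0 (widen_ord (isT : 2 <= 3)%N j),
   \row_(j < 2) qp.2 ord0 (widen_ord (isT : 2 <= 3)%N j)).

Definition sheet_image (A : set TS) (s : R) : set (Cn 2) :=
  [set c | exists qp, A qp /\ cx qp.1 2 = s /\ c = chart qp].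

Definition TE (rho : 'rV[R]_3 -> R) (k d0 : R) : set TS :=
  [set qp | Edisk k d0 qp.1 /\ dot3 qp.2 (nu_of rho qp.1) = 0].

(* A is a smooth complex subvariety of the region Om of C^2:
   locally, A is the intersection of Om with the regular zero set of a
   holomorphic map (complex differentiable = real differentiable with
   C-linear differential) *)
Definition complex_subvariety (Om A : set (Cn 2)) :=
  A `<=` Om /\
  forall a, A a -> exists (k : nat) (U : set (Cn 2)) (f : Cn 2 -> Cn k),
    open U /\ U a /\
    (forall c, U c -> differentiable f c /\
       forall v, 'd f c (Jc v) = Jc ('d f c v)) /\
    (forall w : Cn k, exists v, 'd f a v = w) /\
    (forall c, U c -> (A c <-> Om c /\ f c = 0)).

End Defs.

From HB Require Import structures.
From mathcomp Require Import all_boot all_algebra.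
From mathcomp Require Import all_classical all_reals all_analysis.
From mathcomp Require Import ring lra.

(* Everything happens over the disc of radius 3 d0, where S is the pair of
   planes y_3 = +-1: there nu = +-e_3, J^1(S) is cut out by p_3 = 0, and H_sgn
   is the affine subspace q_3 = sgn, q_1 = -sgn p_2, q_2 = sgn p_1 (z free).
   Its projection is thus the zero set of the C-linear map w_2 + i sgn w_1.
   The Reeb field there is d/dz, so Reeb orbits keep (q, p) fixed and stay in
   H_sgn(2 d0) by a connectedness argument.  A tangent vector of J^1(S) splits
   as a tangent vector of H_sgn plus a vertical vector (0, p', 0), and vertical
   translations preserve T^*E_{2 d0} x R, hence its relative boundary. *)

Set Implicit Arguments.
Unset Strict Implicit.
Unset Printing Implicit Defensive.

Import GRing.Theory Num.Theory numFieldNormedType.Exports.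
Import order.Order.TTheory.

Local Open Scope ring_scope.
Local Open Scope classical_set_scope.

Section Coordinates.
Variable R : realType.
Implicit Types (x y : 'rV[R]_3) (m : Jt R).

Lemma cxE x (j : 'I_3) : x ord0 j = cx x j.
Proof. by rewrite /cx; congr (x _ _); apply/val_inj; rewrite /= inordK. Qed.

Lemma cx_vec3 (a b c : R) :
  [/\ cx (vec3 a b c) 0 = a, cx (vec3 a b c) 1 = b & cx (vec3 a b c) 2 = c].
Proof. by rewrite /cx /vec3 !mxE !inordK. Qed.

Lemma cxD x y i : cx (x + y) i = cx x i + cx y i.
Proof. by rewrite /cx !mxE. Qed.

Lemma cxB x y i : cx (x - y) i = cx x i - cx y i.
Proof. by rewrite /cx !mxE. Qed.

Lemma cxZ (k : R) x i : cx (k *: x) i = k * cx x i.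
Proof. by rewrite /cx !mxE. Qed.

Lemma cx0 i : cx (0 : 'rV[R]_3) i = 0.
Proof. by rewrite /cx !mxE. Qed.

Lemma row3P x y :
  cx x 0 = cx y 0 -> cx x 1 = cx y 1 -> cx x 2 = cx y 2 -> x = y.
Proof.
move=> h0 h1 h2; apply/rowP => -[[|[|[|k]]] Hj] //.
- by rewrite (_ : Ordinal Hj = inord 0) //; apply/val_inj; rewrite /= inordK.
- by rewrite (_ : Ordinal Hj = inord 1) //; apply/val_inj; rewrite /= inordK.
- by rewrite (_ : Ordinal Hj = inord 2) //; apply/val_inj; rewrite /= inordK.
Qed.

Lemma dot3E x y :
  dot3 x y = cx x 0 * cx y 0 + cx x 1 * cx y 1 + cx x 2 * cx y 2.
Proof. by rewrite /dot3 !big_ord_recr big_ord0 /= add0r !cxE. Qed.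

Lemma normr_cx_le x i : (i < 3)%N -> `|cx x i| <= `|x|.
Proof.
move=> hi; rewrite [X in _ <= X]/Num.Def.normr /= mx_normrE /cx.
exact: (le_bigmax _ _ (ord0, inord i)).
Qed.

Lemma jt_eta m : m = (jq m, jp m, jz m).
Proof. by case: m => [[]]. Qed.

Lemma jqDZ m m' (k : R) : jq (m + k *: m') = jq m + k *: jq m'. Proof. by []. Qed.
Lemma jpDZ m m' (k : R) : jp (m + k *: m') = jp m + k *: jp m'. Proof. by []. Qed.

Lemma normr_jq_le m : `|jq m| <= `|m|.
Proof. by rewrite /jq !prod_normE !le_max lexx. Qed.

Lemma normr_jp_le m : `|jp m| <= `|m|.
Proof. by rewrite /jp !prod_normE !le_max lexx /= orbT. Qed.

Lemma dist_jq_le m m' i :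
  (i < 3)%N -> `|cx (jq m) i - cx (jq m') i| <= `|m - m'|.
Proof.
move=> hi; apply: le_trans (normr_jq_le (m - m')).
by rewrite -cxB; apply: normr_cx_le.
Qed.

Lemma mx_norm_entry_le p n (M : 'M[R]_(p, n)) i j : `|M i j| <= `|M|.
Proof.
rewrite [X in _ <= X]/Num.Def.normr /= mx_normrE.
exact: (le_bigmax _ _ (i, j)).
Qed.

Lemma row_norm_le n (M : 'M[R]_(1, n)) (b : R) :
  0 <= b -> (forall j, `|M ord0 j| <= b) -> `|M| <= b.
Proof.
move=> b0 H; rewrite [X in X <= _]/Num.Def.normr /= mx_normrE.
by apply: bigmax_le => // -[i j] _ /=; rewrite (ord1 i).
Qed.

End Coordinates.

Section RealAnalysis.
Variable R : realType.

Lemma nbhs_norm_ltP (V : normedModType R) (x : V) (P : set V) :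
  nbhs x P <-> exists2 e, 0 < e & forall z, `|x - z| < e -> P z.
Proof.
rewrite nbhs_ballP; split => -[e e0 H]; exists e => // z.
- by move=> h; apply: H; rewrite -ball_normE.
- by rewrite -ball_normE => /H.
Qed.

Lemma continuous_at_dist (V : normedModType R) (f : R -> V) t :
  {for t, continuous f} ->
  forall e, 0 < e -> exists2 d, 0 < d & forall s, `|t - s| < d -> `|f t - f s| < e.
Proof.
move=> cf e e0; apply/(@nbhs_norm_ltP R^o t (fun s => `|f t - f s| < e)).
exact: (@cvgrPdist_lt R V R (nbhs t) _ f (f t)).1 cf e e0.
Qed.

Lemma derivable_continuous (V : normedModType R) (f : R -> V) t :
  derivable f t 1 -> {for t, continuous f}.
Proof. by move=> df; apply: differentiable_continuous; apply/derivable1_diffP. Qed.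

Lemma is_derive_linear_comp (V : normedModType R) (c : V -> R) (g : R -> V) t :
  (forall a b, c (a - b) = c a - c b) -> (forall k a, c (k *: a) = k * c a) ->
  (forall a, `|c a| <= `|a|) ->
  derivable g t 1 -> is_derive t 1 (c \o g) (c ('D_1 g t)).
Proof.
move=> cB cZ cN dg.
pose q h : V := h^-1 *: ((g \o shift t) (h *: 1) - g t).
have cq : (fun h : R => h^-1 *: (((c \o g) \o shift t) (h *: 1) - (c \o g) t)) = c \o q.
  by apply: funext => h /=; rewrite cZ cB.
have cvq : (c \o q) @ (0:R)^' --> c ('D_1 g t).
  apply/cvgrPdist_lt => e e0.
  have : \forall h \near (0:R)^', `|'D_1 g t - q h| < e.
    by move: e e0; apply/cvgrPdist_lt; exact: dg.
  by apply: filterS => h /=; rewrite -cB; apply: le_lt_trans.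
split; first by rewrite /derivable cq; apply/cvg_ex; exists (c ('D_1 g t)).
by rewrite /derive cq; exact: cvg_lim.
Qed.

Lemma derive_line (V : normedModType R) (m v : V) :
  derivable (fun t : R => m + t *: v) 0 1 /\ 'D_1 (fun t : R => m + t *: v) 0 = v.
Proof.
have E : \forall h \near (0:R)^',
   h^-1 *: (((fun t : R => m + t *: v) \o shift 0) (h *: 1) - (m + 0 *: v)) = v.
  near=> h; have hn0 : h != 0 by near: h; exact: nbhs_dnbhs_neq.
  rewrite scale0r !addr0 addrAC subrr add0r [_%:A]mulr1 scalerA /shift addr0.
  by rewrite mulVf // scale1r.
split; first exact: (is_cvg_near_cst v).
by rewrite /derive; apply: lim_near_cst.
Unshelve. all: by end_near. Qed.

Lemma derive_locally_constant (V W : normedModType R) (f : V -> W) x v d :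
  0 < d -> (forall h : R, `|h| < d -> f (x + h *: v) = f x) -> 'D_v f x = 0.
Proof.
move=> d0 H; rewrite /derive; apply: lim_near_cst => //; apply: cvg_within.
apply/nbhs_norm_ltP; exists d => // h; rewrite sub0r normrN => hh.
by rewrite /= /shift (addrC (h *: v)) H // subrr scaler0.
Qed.

Lemma is_derive0_constant (f : R -> R) (t d : R) :
  (forall u, `|u - t| < d -> is_derive u 1 f 0) ->
  forall s, `|s - t| < d -> f s = f t.
Proof.
move=> H s hs.
suff key a b : a <= b -> `|a - t| < d -> `|b - t| < d -> f b = f a.
  have ht : `|t - t| < d by rewrite subrr normr0; apply: le_lt_trans hs.
  by case: (leP s t) => st; [rewrite (key s t) | rewrite (key t s) // ltW].
move=> ab ha hb.
have inb x : a <= x <= b -> `|x - t| < d.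
  move: ha hb; rewrite !ltr_norml => /andP[ha1 ha2] /andP[hb1 hb2] /andP[x1 x2].
  by apply/andP; split; lra.
have Hd x : x \in `]a, b[%R -> is_derive x 1 f ((fun=> 0) x).
  by rewrite in_itv /= => /andP[x1 x2]; apply/H/inb; rewrite !ltW.
have Hc : {within `[a, b], continuous f}.
  apply: derivable_within_continuous => x; rewrite in_itv /= => hx.
  by have [] := H x (inb x hx).
have [c _] := MVT_segment ab Hd Hc.
by rewrite mul0r => /eqP; rewrite subr_eq0 => /eqP.
Qed.

Lemma locally_constant_interval (T : Type) (P : R -> T) (c : R) :
  (forall t, `|t| < c -> closure [set u | `|u| < c /\ P u = P 0] t ->
     exists2 d, 0 < d & forall s, `|s - t| < d -> P s = P t) ->
  forall t, `|t| < c -> P t = P 0.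
Proof.
move=> LC; set A := [set t : R | `|t| < c]; set B := [set u | A u /\ P u = P 0].
have cA : connected A.
  have -> : A = [set` `]-c, c[%R].
    by apply/seteqP; split => x; rewrite /A /= in_itv /= ltr_norml.
  by apply/connected_intervalP; exact: interval_is_interval.
move=> t At.
have A0 : A 0 by rewrite /A /= normr0; exact: le_lt_trans (normr_ge0 t) At.
suff BA : B = A by have [] : B t by rewrite BA.
clear t At.
apply: cA; first by exists 0.
- exists [set t | exists2 d, 0 < d & forall s, `|s - t| < d -> A s -> P s = P 0].
    rewrite openE => t [d d0 Hd]; apply/nbhs_norm_ltP; exists (d / 2).
      by rewrite divr_gt0.
    move=> u hu; exists (d / 2); first by rewrite divr_gt0.
    by move=> s hs; apply: Hd; have := ler_distD u s t; rewrite (distrC u t); lra.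
  apply/seteqP; split => [t [At Pt]|t [At [d d0 Hd]]]; last first.
    by split => //; apply: Hd => //; rewrite subrr normr0.
  have [d d0 Hd] := LC t At (subset_closure (conj At Pt)).
  by split => //; exists d => // s hs _; rewrite Hd.
- exists (closure B); first exact: closed_closure.
  apply/seteqP; split => [t Bt|t [At cBt]]; first by split; [case: Bt|apply: subset_closure].
  split => //; have [d d0 Hd] := LC t At cBt.
  have [v [[Av Pv] hv]] : exists v, (B `&` [set v | `|t - v| < d]) v.
    by apply: cBt; apply/nbhs_norm_ltP; exists d.
  by rewrite -Pv Hd // distrC.
Qed.

Lemma sqrD_le (a d : R) : `|d| <= 1 -> (a + d) ^+ 2 <= a ^+ 2 + `|d| * (2 * `|a| + 1).
Proof.
move=> hd; have := ler_norm (a * d); rewrite normrM => had.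
have d2 : d ^+ 2 <= `|d| by rewrite -real_normK ?num_real //; have := normr_ge0 d; nra.
by have := normr_ge0 a; have := normr_ge0 d; nra.
Qed.

Lemma normr_le_sqr (a b : R) : 0 <= b -> a ^+ 2 <= b ^+ 2 -> `|a| <= b.
Proof. by move=> b0; rewrite -real_normK ?num_real // ler_sqr // nnegrE. Qed.

Lemma sign_sqr (s : R) : (s = 1 \/ s = -1) -> s * s = 1.
Proof. by case=> ->; rewrite ?mulrNN mulr1. Qed.

Lemma is_derive_jq_cx (g : R -> Jt R) t i : (i < 3)%N -> derivable g t 1 ->
  is_derive t 1 (fun s => cx (jq (g s)) i) (cx (jq ('D_1 g t)) i).
Proof.
move=> hi; apply: (is_derive_linear_comp (c := fun m => cx (jq m) i)).
- by move=> a b; rewrite -cxB.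
- by move=> k a; rewrite -cxZ.
- by move=> a; apply: le_trans (normr_cx_le _ hi) (normr_jq_le a).
Qed.

Lemma is_derive_jp_cx (g : R -> Jt R) t i : (i < 3)%N -> derivable g t 1 ->
  is_derive t 1 (fun s => cx (jp (g s)) i) (cx (jp ('D_1 g t)) i).
Proof.
move=> hi; apply: (is_derive_linear_comp (c := fun m => cx (jp m) i)).
- by move=> a b; rewrite -cxB.
- by move=> k a; rewrite -cxZ.
- by move=> a; apply: le_trans (normr_cx_le _ hi) (normr_jp_le a).
Qed.

Lemma tangent_cone_line (A : set (Jt R)) m v e :
  0 < e -> (forall t, `|t| < e -> A (m + t *: v)) -> tangent_cone A m v.
Proof.
move=> e0 Av; have [dv Dv] := derive_line m v.
by exists (fun t => m + t *: v), e; rewrite scale0r addr0.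
Qed.

End RealAnalysis.

Section ComplexLine.
Variable R : realType.

(* In the coordinates w_j = u_j + i v_j of C^2 this is w_2 + i sgn w_1. *)
Definition Hequation (sgn : R) (c : Cn R 2) : Cn R 1 :=
  (\row_(j < 1) (c.1 ord0 (inord 1) - sgn * c.2 ord0 (inord 0)),
   \row_(j < 1) (c.2 ord0 (inord 1) + sgn * c.1 ord0 (inord 0))).

Lemma Hequation_is_linear sgn : linear (Hequation sgn).
Proof.
by move=> a u v; rewrite /Hequation /=; congr (_, _); apply/rowP => j; rewrite !mxE /=; ring.
Qed.

Lemma HequationB sgn u v : Hequation sgn (u - v) = Hequation sgn u - Hequation sgn v.
Proof. by rewrite /Hequation /=; congr (_, _); apply/rowP => j; rewrite !mxE /=; ring. Qed.

Lemma Hequation_norm_le sgn (v : Cn R 2) :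
  `|Hequation sgn v| <= (1 + `|sgn|) * `|v|.
Proof.
have h1 : `|v.1| <= `|v| by rewrite prod_normE le_max lexx.
have h2 : `|v.2| <= `|v| by rewrite prod_normE le_max lexx orbT.
have e1 := mx_norm_entry_le v.1 ord0 (inord 1).
have e2 := mx_norm_entry_le v.1 ord0 (inord 0).
have e3 := mx_norm_entry_le v.2 ord0 (inord 1).
have e4 := mx_norm_entry_le v.2 ord0 (inord 0).
have s0 := normr_ge0 sgn; have n0 := normr_ge0 v.
have sv : `|sgn| * `|v.1 ord0 (inord 0)| <= `|sgn| * `|v| by nra.
have sv' : `|sgn| * `|v.2 ord0 (inord 0)| <= `|sgn| * `|v| by nra.
have b0 : 0 <= (1 + `|sgn|) * `|v| by apply: mulr_ge0; lra.
rewrite prod_normE ge_max; apply/andP; split; apply: row_norm_le => // j; rewrite !mxE.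
- by apply: le_trans (ler_normB _ _) _; rewrite normrM; lra.
- by apply: le_trans (ler_normD _ _) _; rewrite normrM; lra.
Qed.

Lemma Hequation_continuous sgn : continuous (Hequation sgn).
Proof.
move=> c; apply/cvgrPdist_lt => e e0.
apply/(@nbhs_norm_ltP _ ('rV[R]_2 * 'rV[R]_2)%type).
have s1 : 0 < 1 + `|sgn| by have := normr_ge0 sgn; lra.
exists (e / (1 + `|sgn|)); first by rewrite divr_gt0.
move=> d hd; rewrite -HequationB; apply: le_lt_trans (Hequation_norm_le _ _) _.
by rewrite mulrC -ltr_pdivlMr.
Qed.

Lemma diff_Hequation sgn c :
  differentiable (Hequation sgn) c /\ 'd (Hequation sgn) c = Hequation sgn :> (_ -> _).
Proof.
pose L : {linear Cn R 2 -> Cn R 1} :=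
  HB.pack (Hequation sgn)
    (GRing.isLinear.Build _ _ _ _ (Hequation sgn) (Hequation_is_linear sgn)).
split; first exact: (@linear_differentiable _ _ _ L c (Hequation_continuous (sgn := sgn))).
exact: (@diff_lin _ _ _ L c (Hequation_continuous (sgn := sgn))).
Qed.

Lemma Hequation_Jc sgn v : Hequation sgn (Jc v) = Jc (Hequation sgn v).
Proof. by rewrite /Hequation /Jc /=; congr (_, _); apply/rowP => j; rewrite !mxE; ring. Qed.

Lemma Hequation_surjective sgn (w : Cn R 1) : exists v, Hequation sgn v = w.
Proof.
exists (\row_(j < 2) ((val j == 1%N)%:R * w.1 ord0 ord0),
        \row_(j < 2) ((val j == 1%N)%:R * w.2 ord0 ord0)).
case: w => w1 w2; rewrite /Hequation /=; congr (_, _); apply/rowP => j;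
  by rewrite !mxE !inordK //= (ord1 j) mul1r mul0r mulr0 ?subr0 ?addr0.
Qed.

Lemma Hequation_chartP sgn (qp : TS R) : Hequation sgn (chart qp) = 0 <->
  cx qp.1 1 = sgn * cx qp.2 0 /\ cx qp.2 1 = - sgn * cx qp.1 0.
Proof.
have chartE j : (j < 2)%N ->
    (chart qp).1 ord0 (inord j) = cx qp.1 j /\ (chart qp).2 ord0 (inord j) = cx qp.2 j.
  move=> hj; rewrite /chart /= !mxE /cx.
  by split; congr (_ _ _); apply/val_inj; rewrite /= !inordK //; apply: leqW.
have [q0 p0] := chartE 0%N isT; have [q1 p1] := chartE 1%N isT.
rewrite /Hequation q0 q1 p0 p1; split => [e|[-> ->]].
  have e1 := congr1 (fun c : Cn R 1 => c.1 ord0 ord0) e.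
  have e2 := congr1 (fun c : Cn R 1 => c.2 ord0 ord0) e.
  by rewrite /= !mxE in e1 e2; split; lra.
by congr (_, _); apply/rowP => j; rewrite !mxE; ring.
Qed.

End ComplexLine.

Section FlatPart.
Variables (R : realType) (d0 : R) (K : set 'rV[R]_3) (rho : 'rV[R]_3 -> R).
Hypothesis d0_gt0 : 0 < d0.
Hypothesis K_def : K = [set y | rho y <= 0].
Hypothesis rho_smooth : smooth3 rho.
Hypothesis grad_neq0 : forall y, bdry K y -> grad rho y != 0.
Hypothesis S_flat : forall y,
  (bdry K y /\ cx y 0 ^+ 2 + cx y 1 ^+ 2 <= 3 ^+ 2 * d0 ^+ 2) <-> Edisk 3 d0 y.
Implicit Types (x y : 'rV[R]_3) (m : Jt R).

Local Notation S := (bdry K).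
Local Notation X := (J1 rho S).

Definition rad2 y := cx y 0 ^+ 2 + cx y 1 ^+ 2.

(* The part of S over the open disc of radius 3 d0, where S consists of the
   two planes y_3 = 1 and y_3 = -1. *)
Definition flat y := S y /\ rad2 y < 3 ^+ 2 * d0 ^+ 2.

Lemma flat_sheet y : flat y -> cx y 2 = 1 \/ cx y 2 = -1.
Proof. by move=> [Sy hr]; have [] := (S_flat y).1 (conj Sy (ltW hr)). Qed.

Lemma flat_on_sheet y :
  (cx y 2 = 1 \/ cx y 2 = -1) -> rad2 y < 3 ^+ 2 * d0 ^+ 2 -> flat y.
Proof. by move=> hs hr; split => //; have [] := (S_flat y).2 (conj hs (ltW hr)). Qed.

Lemma Edisk2_flat y : Edisk 2 d0 y -> flat y.
Proof.
move=> [hs hr]; apply: flat_on_sheet => //; apply: le_lt_trans hr _.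
by rewrite !expr2; have := mulr_gt0 d0_gt0 d0_gt0; lra.
Qed.

Lemma rho_bdry y : S y -> rho y = 0.
Proof.
move=> [Ky Nint]; have : rho y <= 0 by move: Ky; rewrite K_def.
rewrite le_eqVlt => /orP[/eqP //|neg]; exfalso; apply: Nint.
have cr : {for y, continuous rho} := differentiable_continuous (rho_smooth [::] y).
have nb : nbhs (rho y) [set r : R | r < 0].
  apply/nbhs_norm_ltP; exists (- rho y); first by rewrite oppr_gt0.
  by move=> z hz /=; have := ler_norm (z - rho y); rewrite distrC; lra.
have H : nbhs y [set z | rho z < 0] := cr _ nb.
by rewrite /interior K_def; apply: filterS H => z /=; exact: ltW.
Qed.

Lemma flat_shift y v : flat y -> cx v 2 = 0 ->
  exists2 e, 0 < e & forall h, `|h| < e -> flat (y + h *: v).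
Proof.
move=> fy v2; have hs := flat_sheet fy; case: fy => Sy hr.
set M := 3 ^+ 2 * d0 ^+ 2 - rad2 y.
have M0 : 0 < M by rewrite /M subr_gt0.
set C := `|cx v 0| * (2 * `|cx y 0| + 1) + `|cx v 1| * (2 * `|cx y 1| + 1).
set D := `|cx v 0| + `|cx v 1| + 1.
have a0 := normr_ge0 (cx y 0); have a1 := normr_ge0 (cx y 1).
have a2 := normr_ge0 (cx v 0); have a3 := normr_ge0 (cx v 1).
have C0 : 0 <= C by rewrite /C; nra.
have D0 : 0 < D by rewrite /D; lra.
exists (Num.min (1 / D) (M / (2 * C + 1))); first by rewrite lt_min !divr_gt0 //; lra.
move=> h; rewrite lt_min => /andP[h1 h2].
rewrite ltr_pdivlMr in h2; last by lra.
rewrite ltr_pdivlMr // in h1.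
have hh := normr_ge0 h.
apply: flat_on_sheet; first by rewrite cxD cxZ v2 mulr0 addr0.
rewrite /rad2 !cxD !cxZ.
have b0 := @sqrD_le _ (cx y 0) (h * cx v 0).
have b1 := @sqrD_le _ (cx y 1) (h * cx v 1).
rewrite !normrM in b0 b1.
have e0 : `|h| * `|cx v 0| <= 1 by rewrite /D in h1; nra.
have e1 : `|h| * `|cx v 1| <= 1 by rewrite /D in h1; nra.
have hC : `|h| * C <= `|h| * (2 * C + 1) by nra.
by have := b0 e0; have := b1 e1; move: h2 hC; rewrite /C /M /rad2; lra.
Qed.

Lemma grad_flat y i : flat y -> (i < 2)%N -> cx (grad rho y) i = 0.
Proof.
move=> fy hi; rewrite /grad /cx mxE.
set v := delta_mx ord0 (inord i) : 'rV[R]_3.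
have v2 : cx v 2 = 0.
  rewrite /v /cx mxE eqxx /=; case: eqP => // /(congr1 val) /=.
  by rewrite !inordK //; [case: i hi {v} => [|[|]] | apply: leqW].
have [e e0 He] := flat_shift fy v2.
apply: (derive_locally_constant e0) => h hh.
by rewrite (rho_bdry (He h hh).1) (rho_bdry fy.1).
Qed.

Lemma nu_flat y : flat y ->
  [/\ cx (nu_of rho y) 0 = 0, cx (nu_of rho y) 1 = 0 & cx (nu_of rho y) 2 ^+ 2 = 1].
Proof.
move=> fy; have g0 := grad_flat (i:=0) fy isT; have g1 := grad_flat (i:=1) fy isT.
have g2 : cx (grad rho y) 2 != 0.
  apply/eqP => g2; have := grad_neq0 fy.1.
  have -> : grad rho y = 0 by apply: row3P; rewrite cx0.
  by rewrite eqxx.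
have dg : dot3 (grad rho y) (grad rho y) = cx (grad rho y) 2 ^+ 2.
  by rewrite dot3E g0 g1 !mul0r !add0r expr2.
rewrite /nu_of dg sqrtr_sqr !cxZ g0 g1 !mulr0; split => //.
rewrite exprMn exprVn -(real_normK (num_real (cx (grad rho y) 2))) mulVf //.
by rewrite expf_neq0 // normr_eq0.
Qed.

Lemma J1_flatP m : flat (jq m) -> X m <-> cx (jp m) 2 = 0.
Proof.
move=> fq; have [n0 n1 n2] := nu_flat fq.
have n2' : cx (nu_of rho (jq m)) 2 != 0.
  by apply/eqP => h; move: n2; rewrite h expr0n /= => /eqP; rewrite eq_sym oner_eq0.
rewrite /J1 /= dot3E n0 n1 !mulr0 !add0r; split.
- by move=> [_ /eqP]; rewrite mulf_eq0 (negPf n2') orbF => /eqP.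
- by move=> ->; rewrite mul0r; split => //; exact: fq.1.
Qed.

Lemma flat_of_close y0 y (dl : R) : 0 <= dl <= 1 / 2 ->
  dl * (2 * `|cx y0 0| + 2 * `|cx y0 1| + 2) < 3 ^+ 2 * d0 ^+ 2 - rad2 y0 ->
  S y -> (forall i, (i < 3)%N -> `|cx y i - cx y0 i| < dl) ->
  flat y /\ ((cx y0 2 = 1 \/ cx y0 2 = -1) -> cx y 2 = cx y0 2).
Proof.
move=> /andP[dl0 dlh] dM Sy hc.
have c0 := hc 0%N isT; have c1 := hc 1%N isT; have c2 := hc 2%N isT.
have b0 := @sqrD_le _ (cx y0 0) (cx y 0 - cx y0 0).
have b1 := @sqrD_le _ (cx y0 1) (cx y 1 - cx y0 1).
rewrite (addrC (cx y0 0)) subrK in b0; rewrite (addrC (cx y0 1)) subrK in b1.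
have a0 := normr_ge0 (cx y0 0); have a1 := normr_ge0 (cx y0 1).
have fy : flat y.
  split => //; rewrite /rad2.
  have e0 : `|cx y 0 - cx y0 0| * (2 * `|cx y0 0| + 1) <= dl * (2 * `|cx y0 0| + 1).
    by nra.
  have e1 : `|cx y 1 - cx y0 1| * (2 * `|cx y0 1| + 1) <= dl * (2 * `|cx y0 1| + 1).
    by nra.
  by have := b0 ltac:(lra); have := b1 ltac:(lra); move: dM; rewrite /rad2; lra.
split => // hs; move: c2 (flat_sheet fy); rewrite ltr_norml => /andP[c2a c2b] hy.
by case: hs => h0; case: hy => h1; rewrite h0 h1 in c2a c2b *; lra.
Qed.

Lemma flat_near m : flat (jq m) -> exists2 dl, 0 < dl & forall m',
  S (jq m') -> `|m - m'| < dl -> flat (jq m') /\ cx (jq m') 2 = cx (jq m) 2.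
Proof.
move=> fq; set y0 := jq m.
set M := 3 ^+ 2 * d0 ^+ 2 - rad2 y0; set N := 2 * `|cx y0 0| + 2 * `|cx y0 1| + 2.
have M0 : 0 < M by rewrite /M subr_gt0; exact: fq.2.
have N0 : 0 < N.
  by rewrite /N; have := normr_ge0 (cx y0 0); have := normr_ge0 (cx y0 1); lra.
set dl := Num.min (1 / 2) (M / (2 * N)).
have dl0 : 0 < dl by rewrite lt_min !divr_gt0 //; lra.
have dlh : dl <= 1 / 2 by rewrite ge_min lexx.
have dlM : dl * N < M.
  have h : dl <= M / (2 * N) by rewrite ge_min lexx orbT.
  have h2 : M / (2 * N) * N = M / 2 by field; lra.
  by have := ler_wpM2r (ltW N0) h; rewrite h2; lra.
exists dl => // m' Sm' hm.
have close i : (i < 3)%N -> `|cx (jq m') i - cx y0 i| < dl.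
  by move=> hi; apply: le_lt_trans (dist_jq_le m' m hi) _; rewrite distrC.
have [fm' sh] := flat_of_close (dl := dl) ltac:(rewrite ltW //) dlM Sm' close.
by split => //; apply/sh/flat_sheet.
Qed.

Lemma flat_near_disc2 : exists2 dl, 0 < dl & forall m m',
  rad2 (jq m) <= 2 ^+ 2 * d0 ^+ 2 -> S (jq m') -> `|m - m'| < dl -> flat (jq m').
Proof.
set dl := Num.min (1 / 2) (d0 ^+ 2 / (4 * d0 + 1)).
have hd := d0_gt0.
have dD : 0 < 4 * d0 + 1 by lra.
have dd : 0 < d0 ^+ 2 by rewrite exprn_gt0.
have dl0 : 0 < dl by rewrite lt_min !divr_gt0 //; lra.
exists dl => // m m' hr Sm' hm; set y0 := jq m.
have := sqr_ge0 (cx y0 0); have := sqr_ge0 (cx y0 1); move: hr; rewrite /rad2 => hr s1 s0.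
have a0 : `|cx y0 0| <= 2 * d0 by apply: normr_le_sqr; rewrite ?exprMn; lra.
have a1 : `|cx y0 1| <= 2 * d0 by apply: normr_le_sqr; rewrite ?exprMn; lra.
have dlM : dl * (2 * `|cx y0 0| + 2 * `|cx y0 1| + 2) < 3 ^+ 2 * d0 ^+ 2 - rad2 y0.
  have e1 : dl * (2 * `|cx y0 0| + 2 * `|cx y0 1| + 2) <= dl * (2 * (4 * d0 + 1)).
    by rewrite ler_pM2l //; lra.
  have e2 : dl * (4 * d0 + 1) <= d0 ^+ 2.
    have h : dl <= d0 ^+ 2 / (4 * d0 + 1) by rewrite ge_min lexx orbT.
    by have := ler_wpM2r (ltW dD) h; rewrite mulfVK //; lra.
  by rewrite /rad2; lra.
have dlh : 0 <= dl <= 1 / 2 by rewrite ltW //= ge_min lexx.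
have close i : (i < 3)%N -> `|cx (jq m') i - cx y0 i| < dl.
  by move=> hi; apply: le_lt_trans (dist_jq_le m' m hi) _; rewrite distrC.
by have [] := flat_of_close dlh dlM Sm' close.
Qed.

(* Over the flat part a point of H_sgn is (q, p, z) = (y, (x_1, x_2, 0), x.y)
   with y = sgn (-x_2, x_1, 1). *)
Definition Heqs (sgn : R) (q p : 'rV[R]_3) :=
  [/\ cx q 2 = sgn, cx q 0 = - sgn * cx p 1, cx q 1 = sgn * cx p 0 & cx p 2 = 0].

Lemma Hset_flatP sgn m : (sgn = 1 \/ sgn = -1) -> flat (jq m) ->
  Hset rho S sgn m <-> Heqs sgn (jq m) (jp m).
Proof.
move=> hsg fq; have ss := sign_sqr hsg; split.
  move=> [x [y [t [Sy [pos [yE mE]]]]]]; move: fq; rewrite mE /jet_map /jq /jp /= => fy.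
  have [n0 n1 n2] := nu_flat fy.
  have [y0 y1 y2] : [/\ cx y 0 = t * - cx x 1, cx y 1 = t * cx x 0 & cx y 2 = t].
    by rewrite yE !cxZ; have [-> -> ->] := cx_vec3 (- cx x 1) (cx x 0) 1; rewrite mulr1.
  have ht : t = sgn.
    have := flat_sheet fy; rewrite y2 => h.
    by case: hsg pos => -> pos; case: h => h; rewrite h in pos *; lra.
  move: n0 n1 n2; generalize (nu_of rho y) => nu n0 n1 n2.
  rewrite /Heqs !cxB !cxZ n0 n1 !mulr0 !subr0 y0 y1 y2 ht dot3E n0 n1 !mulr0 !add0r.
  split => //; first by rewrite mulrN mulNr.
  by rewrite -mulrA -expr2 n2 mulr1 subrr.
rewrite [m]jt_eta; move: fq; set q := jq m; set p := jp m; set z := jz m.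
move=> fq [q2 q0 q1 p2]; have [n0 n1 n2] := nu_flat fq.
set x := vec3 (cx p 0) (cx p 1) (sgn * (z - cx p 0 * cx q 0 - cx p 1 * cx q 1)).
have [x0 x1 x2] := cx_vec3 (cx p 0) (cx p 1) (sgn * (z - cx p 0 * cx q 0 - cx p 1 * cx q 1)).
exists x, q, sgn; split; first exact: fq.1.
split; first by rewrite ss ltr01.
split.
  have [h0 h1 h2] := cx_vec3 (- cx x 1) (cx x 0) 1.
  apply: row3P; rewrite !cxZ ?h0 ?h1 ?h2.
  - by rewrite q0 x1 mulrN mulNr.
  - by rewrite q1 x0.
  - by rewrite q2 mulr1.
rewrite /jet_map; move: n0 n1 n2; generalize (nu_of rho q) => nu n0 n1 n2.
congr (_, _, _).
  apply: row3P; rewrite !cxB !cxZ ?n0 ?n1 ?mulr0 ?subr0 ?x0 ?x1 //.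
  by rewrite p2 dot3E n0 n1 !mulr0 !add0r x2 -mulrA -expr2 n2 mulr1 subrr.
by rewrite dot3E x0 x1 x2 q2 mulrAC ss mul1r; ring.
Qed.

Lemma sheet_image_HkP sgn s c : (sgn = 1 \/ sgn = -1) ->
  sheet_image (proj_set (Hk rho S sgn 2 d0)) s c <->
  [/\ s = sgn, sheet_image (TE rho 2 d0) s c & Hequation sgn c = 0].
Proof.
move=> hsg; have ss := sign_sqr hsg; split.
  move=> [_ [[m [[Hm [Xm Em]] ->]] [s2 ->]]].
  have [q2 q0 q1 p2] := (Hset_flatP hsg (Edisk2_flat Em)).1 Hm.
  split; first by rewrite -s2 q2.
    by exists (jq m, jp m); split => //; split => //; exact: Xm.2.
  by apply/Hequation_chartP; rewrite /= q0 mulrA mulrNN ss mul1r.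
move=> [-> [[q p] [[Eq Dq] [q2 ->]]]] /Hequation_chartP /= [q1 p1].
have fq := Edisk2_flat Eq.
have Xm : J1 rho S (q, p, 0) by split => //; exact: fq.1.
exists (q, p); split => //; exists (q, p, 0); split => //; split => //.
apply/(Hset_flatP (m := (q, p, 0)) hsg fq); split => //.
  by rewrite p1 mulrA mulrNN ss mul1r.
exact/(J1_flatP (m := (q, p, 0)) fq).
Qed.

Lemma complex_subvariety_Hk sgn s : (sgn = 1 \/ sgn = -1) ->
  complex_subvariety (sheet_image (TE rho 2 d0) s)
    (sheet_image (proj_set (Hk rho S sgn 2 d0)) s).
Proof.
move=> hsg; split => [c /(sheet_image_HkP _ _ hsg) [] //|a].
move=> /(sheet_image_HkP _ _ hsg) [-> _ _].
exists 1%N, setT, (Hequation sgn); split; first exact: openT.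
split => //; split.
  move=> c _; have [dH ->] := diff_Hequation sgn c.
  by split => // v; exact: Hequation_Jc.
split; first by have [_ ->] := diff_Hequation sgn a; exact: Hequation_surjective.
move=> c _; split; first by move=> /(sheet_image_HkP _ _ hsg) [].
by move=> [Ec Hc]; apply/(sheet_image_HkP _ _ hsg).
Qed.

Lemma tangent_flat m w : X m -> flat (jq m) -> tangent_cone X m w ->
  cx (jq w) 2 = 0 /\ cx (jp w) 2 = 0.
Proof.
move=> Xm fq [g [e [e0 [g0 [Xg [dg <-]]]]]].
have [dl dl0 near] := flat_near fq.
have [d1 d10 cg] := continuous_at_dist (derivable_continuous dg) dl0.
have de : 0 < Num.min e d1 by rewrite lt_min e0.
have g_flat h : `|h| < Num.min e d1 ->
    cx (jq (g h)) 2 = cx (jq (g 0)) 2 /\ cx (jp (g h)) 2 = cx (jp (g 0)) 2.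
  rewrite lt_min => /andP[he hd].
  have close : `|m - g h| < dl by rewrite -g0; apply: cg; rewrite sub0r normrN.
  have [fh ->] := near (g h) (Xg h he).1 close.
  by rewrite g0 ((J1_flatP fh).1 (Xg h he)) ((J1_flatP fq).1 Xm).
have [_ <-] := is_derive_jq_cx (i := 2) isT dg.
have [_ <-] := is_derive_jp_cx (i := 2) isT dg.
by split; apply: (derive_locally_constant de) => h hh;
  rewrite [_ *: _]mulr1 add0r; have [] := g_flat h hh.
Qed.

Lemma tangent_J1_flat m v : X m -> flat (jq m) ->
  cx (jq v) 2 = 0 -> cx (jp v) 2 = 0 -> tangent_cone X m v.
Proof.
move=> Xm fq qv2 pv2; have [e e0 He] := flat_shift fq qv2.
apply: (tangent_cone_line e0) => t ht; apply/(J1_flatP (m := m + t *: v) (He t ht)).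
by rewrite jpDZ cxD cxZ pv2 ((J1_flatP fq).1 Xm) mulr0 addr0.
Qed.

Lemma rel_boundary_flat m : rel_boundary X (TEx rho S 2 d0) m -> flat (jq m).
Proof.
move=> [Xm RB]; have [dl dl0 near] := flat_near_disc2.
have [[a [[_ [_ hr]] ha]] _] := RB [set m' | `|m - m'| < dl]
  ltac:(by apply/nbhs_norm_ltP; exists dl).
by apply: near hr Xm.1 _; rewrite distrC.
Qed.

Lemma tangent_Hset_flat sgn m q' z' : (sgn = 1 \/ sgn = -1) ->
  Hset rho S sgn m -> flat (jq m) -> cx q' 2 = 0 ->
  tangent_cone (Hset rho S sgn) m (q', vec3 (sgn * cx q' 1) (- sgn * cx q' 0) 0, z').
Proof.
move=> hsg Hm fq q'2; have [e e0 He] := flat_shift fq q'2.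
have [q2 q0 q1 p2] := (Hset_flatP hsg fq).1 Hm.
have [v0 v1 v2] := cx_vec3 (sgn * cx q' 1) (- sgn * cx q' 0) 0.
apply: (tangent_cone_line e0) => t ht.
apply/(Hset_flatP (m := m + t *: (q', _, z')) hsg (He t ht)).
rewrite jqDZ jpDZ /= /Heqs !cxD !cxZ v0 v1 v2 q2 q0 q1 p2 q'2.
by case: hsg => ->; split; ring.
Qed.

Lemma J1_vertical_shift m v t : flat (jq m) -> jq v = 0 -> cx (jp v) 2 = 0 ->
  X (m + t *: v) <-> X m.
Proof.
move=> fq qv pv2; have fq' : flat (jq (m + t *: v)) by rewrite jqDZ qv scaler0 addr0.
by rewrite (J1_flatP fq') (J1_flatP fq) jpDZ cxD cxZ pv2 mulr0 addr0.
Qed.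

Lemma tangent_rel_boundary_vertical m p' : rel_boundary X (TEx rho S 2 d0) m ->
  cx p' 2 = 0 -> tangent_cone (rel_boundary X (TEx rho S 2 d0)) m (0, p', 0).
Proof.
move=> RBm p'2; have fq := rel_boundary_flat RBm; case: RBm => Xm RB.
set v : Jt R := (0, p', 0); have qv : jq v = 0 by [].
have TEx_shift m' t : flat (jq m') -> TEx rho S 2 d0 (m' + t *: v) <-> TEx rho S 2 d0 m'.
  move=> fm; rewrite /TEx /= (J1_vertical_shift t fm qv p'2).
  by rewrite jqDZ qv scaler0 addr0.
have [dl dl0 near] := flat_near_disc2.
apply: (tangent_cone_line ltr01) => t _.
split; first exact/(J1_vertical_shift t fq qv p'2).
move=> U /nbhs_norm_ltP [e e0 He]; set r := Num.min e (dl / 2).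
have r0 : 0 < r by rewrite lt_min e0 divr_gt0.
have [[a [TEa ha]] [b [Xb [TEb hb]]]] := RB [set m' | `|m - m'| < r]
  ltac:(by apply/nbhs_norm_ltP; exists r).
move: ha hb; rewrite /= !lt_min => /andP[ha1 ha2] /andP[hb1 hb2].
have fa : flat (jq a) := Edisk2_flat TEa.2.
have fb : flat (jq b).
  apply: near TEa.2.2 Xb.1 _.
  by have := ler_distD m a b; rewrite (distrC a m); lra.
have shiftE m' : `|m + t *: v - (m' + t *: v)| = `|m - m'|.
  by rewrite opprD addrACA subrr addr0.
split.
  by exists (a + t *: v); split; [exact/(TEx_shift _ _ fa) | apply: He; rewrite shiftE].
exists (b + t *: v); split; first exact/(J1_vertical_shift t fb qv p'2).
by split; [rewrite (TEx_shift _ _ fb) | apply: He; rewrite shiftE].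
Qed.

Lemma transverse_Hset sgn : (sgn = 1 \/ sgn = -1) ->
  transverse X (Hset rho S sgn) (rel_boundary X (TEx rho S 2 d0)).
Proof.
move=> hsg m Hm RBm w tw; have fq := rel_boundary_flat RBm.
have [q'2 p'2] := tangent_flat RBm.1 fq tw.
set a := vec3 (sgn * cx (jq w) 1) (- sgn * cx (jq w) 0) 0.
have [_ _ a2] := cx_vec3 (sgn * cx (jq w) 1) (- sgn * cx (jq w) 0) 0.
exists (jq w, a, jz w), (0, jp w - a, 0); split.
  exact: tangent_Hset_flat.
split; first by apply: tangent_rel_boundary_vertical; rewrite // cxB p'2 a2 subrr.
by rewrite [w in LHS]jt_eta; congr (_, _, _); rewrite /= ?addr0 // addrC subrK.
Qed.

Lemma reeb_field_flat Rf m : reeb_field X Rf -> X m -> flat (jq m) -> Rf m = (0, 0, 1).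
Proof.
(* dalpha (Rf m) vanishes on the horizontal q- and p-directions, which are
   tangent to J^1(S) over the flat part. *)
move=> HR Xm fq; have [tR [aR dR]] := HR m Xm.
have [q2 p2] := tangent_flat Xm fq tR.
have [u00 u01 u02] := cx_vec3 (1 : R) 0 0; have [u10 u11 u12] := cx_vec3 (0 : R) 1 0.
have z2 := cx0 R 2.
have T1 := dR _ (tangent_J1_flat (v := (vec3 1 0 0, 0, 0)) Xm fq u02 z2).
have T2 := dR _ (tangent_J1_flat (v := (vec3 0 1 0, 0, 0)) Xm fq u12 z2).
have T3 := dR _ (tangent_J1_flat (v := (0, vec3 1 0 0, 0)) Xm fq z2 u02).
have T4 := dR _ (tangent_J1_flat (v := (0, vec3 0 1 0, 0)) Xm fq z2 u12).
move: q2 p2 aR T1 T2 T3 T4; case: (Rf m) => [[a b] c].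
rewrite /dalpha /alpha /jq /jp /jz /= !dot3E !cx0 u00 u01 u02 u10 u11 u12.
move=> a2 b2 aR T1 T2 T3 T4.
have a0 : cx a 0 = 0 by lra.
have a1 : cx a 1 = 0 by lra.
have b0 : cx b 0 = 0 by lra.
have b1 : cx b 1 = 0 by lra.
rewrite a0 a1 a2 !mulr0 !addr0 subr0 in aR.
by congr (_, _, _); [apply: row3P; rewrite ?cx0 | apply: row3P; rewrite ?cx0 | lra].
Qed.

Section ReebOrbit.
Variables (Rf : Jt R -> Jt R) (g : R -> Jt R) (T : R).
Hypothesis Rf_reeb : reeb_field X Rf.
Hypothesis g_orbit : forall t, `|t| < T ->
  X (g t) /\ derivable g t 1 /\ 'D_1 g t = Rf (g t).

Lemma reeb_orbit_locally_constant t : `|t| < T -> flat (jq (g t)) ->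
  exists2 d, 0 < d & forall s, `|s - t| < d -> (jq (g s), jp (g s)) = (jq (g t), jp (g t)).
Proof.
move=> ht ft; have [dl dl0 near] := flat_near ft.
have [d1 d10 cg] := continuous_at_dist (derivable_continuous (g_orbit ht).2.1) dl0.
set d := Num.min d1 (T - `|t|).
have dpos : 0 < d by rewrite lt_min d10 /= subr_gt0.
have deriv0 u i : `|u - t| < d -> (i < 3)%N ->
    is_derive u 1 (fun s => cx (jq (g s)) i) 0 /\ is_derive u 1 (fun s => cx (jp (g s)) i) 0.
  rewrite lt_min => /andP[h1 h2] hi.
  have hu : `|u| < T by have := ler_normD (u - t) t; rewrite subrK; lra.
  have [Xu [du Du]] := g_orbit hu.
  have [fu _] := near (g u) Xu.1 ltac:(by apply: cg; rewrite distrC).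
  have := is_derive_jq_cx hi du; have := is_derive_jp_cx hi du.
  by rewrite Du (reeb_field_flat Rf_reeb Xu fu) /= cx0.
exists d => // s hs.
have cst i : (i < 3)%N ->
    cx (jq (g s)) i = cx (jq (g t)) i /\ cx (jp (g s)) i = cx (jp (g t)) i.
  move=> hi; split.
    apply: (is_derive0_constant (f := fun u => cx (jq (g u)) i)) hs => u hu.
    by have [] := deriv0 u i hu hi.
  apply: (is_derive0_constant (f := fun u => cx (jp (g u)) i)) hs => u hu.
  by have [] := deriv0 u i hu hi.
have [q0 p0] := cst 0%N isT; have [q1 p1] := cst 1%N isT; have [q2 p2] := cst 2%N isT.
by rewrite (row3P q0 q1 q2) (row3P p0 p1 p2).
Qed.

Lemma reeb_orbit_constant : flat (jq (g 0)) -> rad2 (jq (g 0)) <= 2 ^+ 2 * d0 ^+ 2 ->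
  forall t, `|t| < T -> (jq (g t), jp (g t)) = (jq (g 0), jp (g 0)).
Proof.
move=> f0 r0; apply: locally_constant_interval => t ht cBt.
apply: reeb_orbit_locally_constant => //.
have [dl dl0 near] := flat_near_disc2.
have [d1 d10 cg] := continuous_at_dist (derivable_continuous (g_orbit ht).2.1) dl0.
have [u [[_ Pu] htu]] : exists u,
    ([set u | `|u| < T /\ (jq (g u), jp (g u)) = (jq (g 0), jp (g 0))]
       `&` [set u | `|t - u| < d1]) u.
  by apply: cBt; apply/nbhs_norm_ltP; exists d1.
apply: (near (g u)); first by case: Pu => ->.
  exact: (g_orbit ht).1.1.
by rewrite distrC; apply: cg.
Qed.

End ReebOrbit.

Lemma reeb_invariant_Hk sgn : (sgn = 1 \/ sgn = -1) ->
  reeb_invariant X (Hk rho S sgn 2 d0).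
Proof.
move=> hsg Rf HR g T _ Hg [H0 [X0 E0]] t ht.
have fq0 := Edisk2_flat E0.
have [qt pt] := reeb_orbit_constant HR Hg fq0 E0.2 ht.
have Xt := (Hg t ht).1.
have fqt : flat (jq (g t)) by rewrite qt.
split; last by split => //; rewrite qt.
by apply/(Hset_flatP hsg fqt); rewrite qt pt; apply/(Hset_flatP hsg fq0).
Qed.

End FlatPart.

Theorem lemma3p7 (R : realType) (d0 : R) (K : set 'rV[R]_3)
    (rho : 'rV[R]_3 -> R) :
  0 < d0 ->
  compact K -> is_convex K -> interior K 0 ->
  K = [set y | rho y <= 0] -> smooth3 rho ->
  (forall y, bdry K y -> grad rho y != 0) ->
  (forall y, bdry K y -> bdry K (reflect12 y)) ->
  (forall th y, bdry K y -> bdry K (rot3 th y)) ->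
  (forall y, (bdry K y /\ cx y 0 ^+ 2 + cx y 1 ^+ 2 <= 3 ^+ 2 * d0 ^+ 2) <->
             (Edisk 3 d0 y)) ->
  (forall sgn : R, (sgn = 1 \/ sgn = -1) ->
     transverse (J1 rho (bdry K)) (Hset rho (bdry K) sgn)
       (rel_boundary (J1 rho (bdry K)) (TEx rho (bdry K) 2 d0))) /\
  (forall sgn : R, (sgn = 1 \/ sgn = -1) ->
     reeb_invariant (J1 rho (bdry K)) (Hk rho (bdry K) sgn 2 d0)) /\
  (forall sgn s : R, (sgn = 1 \/ sgn = -1) -> (s = 1 \/ s = -1) ->
     complex_subvariety (sheet_image (TE rho 2 d0) s)
       (sheet_image (proj_set (Hk rho (bdry K) sgn 2 d0)) s)).
Proof.
move=> d0_gt0 _ _ _ K_def rho_smooth grad_neq0 _ _ S_flat.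
split; first by move=> sgn hsg; apply: transverse_Hset.
split; first by move=> sgn hsg; apply: reeb_invariant_Hk.
by move=> sgn s hsg _; apply: complex_subvariety_Hk.
Qed.
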